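(* Let $\mathfrak{R}$ be a complete rewriting system on $\Sigma$ and let $w\in\Sigma^*$. Assume that $\mathrm{Allseq}(w)$ terminates. If there are no cyclical overlaps and no cyclical inclusions in $\mathrm{Allseq}(w)$, then $\mathrm{Allseq}(w)$ converges.
   Context: $\Sigma^*$ is the free monoid on $\Sigma$; a rewriting system is a set of rules $l\to r$ with $l,r\in\Sigma^*$, complete meaning terminating and confluent; $plq\to prq$ is one rewriting step. $u\simeq v$ means $u=ab$, $v=ba$ for some words $a,b$ (cyclic conjugates). $u\rightsquigarrow v$ means some cyclic conjugate $\tilde u$ of $u$ (possibly $u$) satisfies $\tilde u\to v$; $\rightsquigarrow^*$ is its reflexive–transitive closure. A word is cyclically irreducible if it and all its cyclic conjugates are irreducible. $\mathrm{Allseq}(w)$ is the set of all sequences of cyclical reductions $u_1\rightsquigarrow u_2\rightsquigarrow\cdots$ with $u_1$ a cyclic conjugate of $w$; it terminates if none of them is infinite, and converges if, up to $\simeq$, a unique cyclically irreducible word is reached in it. There is a cyclical overlap between two rules of $\mathfrak{R}$ if they have the form $xuy\to u'$ and $yvx\to v'$ with $u',v'$ words, $u,v,x,y$ non-empty words, and $u'v$, $v'u$ not cyclic conjugates. There is a cyclical inclusion between rules $l\to v$ and $l'\to v'$ if either $l'\simeq l$ and $v,v'$ are not cyclic conjugates, or $l'$ is a proper subword of a cyclic conjugate $\ell_1$ of $l$, written $\ell_1=ul'$ with $u$ non-empty, and $v$ and $uv'$ are not cyclic conjugates. ''No cyclical overlaps and no cyclical inclusions in $\mathrm{Allseq}(w)$''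 means that for no word $u$ occurring in a sequence of $\mathrm{Allseq}(w)$ are there rules $r_1,r_2$, each applicable to some cyclic conjugate of $u$, with a cyclical overlap or a cyclical inclusion between $r_1$ and $r_2$. *)

From mathcomp Require Import all_boot.
Set Implicit Arguments. Unset Strict Implicit. Unset Printing Implicit Defensive.

Section Rewriting.
Variable Sigma : Type.
Notation word := (seq Sigma).

Definition rsystem := word -> word -> Prop.

Variable R : rsystem.

Definition rstep (u v : word) : Prop :=
  exists p l r q, R l r /\ u = p ++ l ++ q /\ v = p ++ r ++ q.

Inductive rstar : word -> word -> Prop :=
| rstar_refl u : rstar u u
| rstar_step u v w : rstep u v -> rstar v w -> rstar u w.

Definition terminating : Prop :=
  ~ exists f : nat -> word, forall n, rstep (f n) (f n.+1).

Definition confluent : Prop :=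
  forall u v1 v2, rstar u v1 -> rstar u v2 ->
    exists z, rstar v1 z /\ rstar v2 z.

Definition complete : Prop := terminating /\ confluent.

Definition cyc_conj (u v : word) : Prop :=
  exists a b, u = a ++ b /\ v = b ++ a.

Definition cyc_step (u v : word) : Prop :=
  exists u', cyc_conj u u' /\ rstep u' v.

Inductive cyc_star : word -> word -> Prop :=
| cyc_star_refl u : cyc_star u u
| cyc_star_step u v w : cyc_step u v -> cyc_star v w -> cyc_star u w.

Definition irreducible (u : word) : Prop := ~ exists v, rstep u v.

Definition cyc_irreducible (u : word) : Prop :=
  forall u', cyc_conj u u' -> irreducible u'.

Definition allseq_terminates (w : word) : Prop :=
  ~ exists f : nat -> word,
      cyc_conj w (f 0) /\ forall n, cyc_step (f n) (f n.+1).

Definition occurs_in_allseq (w u : word) : Prop :=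
  exists u1, cyc_conj w u1 /\ cyc_star u1 u.

Definition allseq_converges (w : word) : Prop :=
  exists v, occurs_in_allseq w v /\ cyc_irreducible v /\
    forall v', occurs_in_allseq w v' -> cyc_irreducible v' -> cyc_conj v v'.

Definition cyc_overlap (l1 r1 l2 r2 : word) : Prop :=
  exists x u y v, x <> [::] /\ u <> [::] /\ y <> [::] /\ v <> [::] /\
    l1 = x ++ u ++ y /\ l2 = y ++ v ++ x /\ ~ cyc_conj (r1 ++ v) (r2 ++ u).

Definition cyc_inclusion (l v l' v' : word) : Prop :=
  (cyc_conj l' l /\ ~ cyc_conj v v') \/
  (exists l1 u, cyc_conj l l1 /\ l1 = u ++ l' /\ u <> [::] /\
     ~ cyc_conj v (u ++ v')).

Definition applicable (l z : word) : Prop := exists p q, z = p ++ l ++ q.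

Definition applicable_cyc (l u : word) : Prop :=
  exists u', cyc_conj u u' /\ applicable l u'.

Definition no_cyc_overlap_inclusion (w : word) : Prop :=
  forall u, occurs_in_allseq w u ->
  forall l1 r1 l2 r2, R l1 r1 -> R l2 r2 ->
    applicable_cyc l1 u -> applicable_cyc l2 u ->
    ~ cyc_overlap l1 r1 l2 r2 /\ ~ cyc_inclusion l1 r1 l2 r2.

End Rewriting.

From Stdlib Require Import Classical ClassicalEpsilon.
From mathcomp Require Import all_boot.
Set Implicit Arguments. Unset Strict Implicit. Unset Printing Implicit Defensive.

(* Cyclic reduction is a reduction relation on words taken up to cyclic
   conjugacy. Two cyclic reductions of one word u apply rules l1 -> r1 and
   l2 -> r2 to conjugates l1 s and l2 t of u. Either the two redexes occupy
   disjoint positions of a single conjugate of u, and the two results are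
   joined by confluence of R; or they cover the whole cyclic word and overlap
   at both ends, which is exactly a cyclical overlap or a cyclical inclusion,
   so by hypothesis the two results are already conjugate. This local
   confluence up to conjugacy, together with termination, gives uniqueness of
   the cyclically irreducible word by Newman's argument. *)

Lemma cat_split_prefix (T : Type) (x y z w : seq T) :
  x ++ y = z ++ w -> size x <= size z -> exists m, z = x ++ m /\ y = m ++ w.
Proof.
elim: x z => [|a x IH] [|b z] //=.
- by move=> ->; exists [::].
- by move=> ->; exists (b :: z).
- by case=> -> /IH E; rewrite ltnS => /E [m [-> ->]]; exists m.
Qed.

Section CyclicConjugacy.
Variable T : Type.
Implicit Types u v x a b : seq T.

Lemma cyc_conj_rot u v : cyc_conj u v <-> exists k, v = rot k u.
Proof.
split; first by case=> a [b [-> ->]]; exists (size a); rewrite rot_size_cat.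
by case=> k ->; exists (take k u), (drop k u); rewrite cat_take_drop.
Qed.

Lemma cyc_conj_cat a b : cyc_conj (a ++ b) (b ++ a).
Proof. by exists a, b. Qed.

Lemma cyc_conj_refl u : cyc_conj u u.
Proof. by apply/cyc_conj_rot; exists 0; rewrite rot0. Qed.

Lemma cyc_conj_sym u v : cyc_conj u v -> cyc_conj v u.
Proof.
case/cyc_conj_rot=> k ->; apply/cyc_conj_rot; exists (size (rot k u) - k).
by rewrite -/(rotr k (rot k u)) rotK.
Qed.

Lemma cyc_conj_trans u v x : cyc_conj u v -> cyc_conj v x -> cyc_conj u x.
Proof.
case/cyc_conj_rot=> k ->; case/cyc_conj_rot=> j ->; apply/cyc_conj_rot.
rewrite (rot_minn k u) (rot_minn j) size_rot rot_add_mod ?geq_minr //.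
by eexists.
Qed.

End CyclicConjugacy.

Section CyclicReduction.
Variables (T : Type) (R : rsystem T).
Implicit Types u v a b : seq T.

Lemma rstep_cat p l r q : R l r -> rstep R (p ++ l ++ q) (p ++ r ++ q).
Proof. by move=> H; exists p, l, r, q. Qed.

Lemma cyc_step_conjl u u' v :
  cyc_conj u u' -> cyc_step R u' v -> cyc_step R u v.
Proof.
by move=> H [x [Hx Hs]]; exists x; split=> //; exact: cyc_conj_trans Hx.
Qed.

Lemma cyc_step_rule u v : cyc_step R u v ->
  exists l r s, R l r /\ cyc_conj u (l ++ s) /\ cyc_conj v (r ++ s).
Proof.
case=> u' [Hu [p [l [r [q [HR [Eu ->]]]]]]]; subst u'.
exists l, r, (q ++ p); do !split=> //.
  by apply: cyc_conj_trans Hu _; rewrite !catA -(catA p); exact: cyc_conj_cat.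
by rewrite !catA -(catA p); exact: cyc_conj_cat.
Qed.

Lemma cyc_star_trans u v x :
  cyc_star R u v -> cyc_star R v x -> cyc_star R u x.
Proof. by elim=> // a b c H _ IH /IH; exact: cyc_star_step. Qed.

Lemma cyc_star1 u v : cyc_step R u v -> cyc_star R u v.
Proof. by move=> H; apply: cyc_star_step H (cyc_star_refl _ _). Qed.

Lemma rstar_cyc_star u v : rstar R u v -> cyc_star R u v.
Proof.
elim=> [x|x y z H _ IH]; first exact: cyc_star_refl.
by apply: cyc_star_step IH; exists x; split=> //; exact: cyc_conj_refl.
Qed.

(* A conjugate of the start can be traded for a conjugate of the end, since a
   cyclic step may itself rotate its source first. *)
Lemma cyc_star_conjl a x z : cyc_conj a x -> cyc_star R x z ->
  exists z', cyc_star R a z' /\ cyc_conj z' z.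
Proof.
move=> + H; case: H => [y|y b c Hs Hst] Hax.
  by exists a; split=> //; exact: cyc_star_refl.
exists c; split; last exact: cyc_conj_refl.
exact: cyc_star_step (cyc_step_conjl Hax Hs) Hst.
Qed.

Lemma cyc_star_inv u v :
  cyc_star R u v -> v = u \/ exists a, cyc_step R u a /\ cyc_star R a v.
Proof. by case=> [x|x a y S1 S2]; [left | right; exists a]. Qed.

Lemma cyc_irreducible_conj u v :
  cyc_irreducible R u -> cyc_conj u v -> cyc_irreducible R v.
Proof. by move=> H Huv x /(cyc_conj_trans Huv); exact: H. Qed.

Lemma cyc_irreducible_no_step u v :
  cyc_irreducible R u -> ~ cyc_step R u v.
Proof. by move=> H [x [Hx Hs]]; apply: (H x Hx); exists v. Qed.

Lemma not_cyc_irreducible_step u :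
  ~ cyc_irreducible R u -> exists v, cyc_step R u v.
Proof.
move=> H; apply: NNPP => Hn; apply: H => x Hx [v Hv]; apply: Hn.
by exists v, x.
Qed.

Definition cyc_joinable a b :=
  exists z1 z2, cyc_star R a z1 /\ cyc_star R b z2 /\ cyc_conj z1 z2.

Lemma cyc_joinable_sym a b : cyc_joinable a b -> cyc_joinable b a.
Proof.
by case=> z1 [z2 [S1 [S2 K]]]; exists z2, z1; do !split=> //; exact: cyc_conj_sym.
Qed.

Lemma cyc_conj_joinable a b : cyc_conj a b -> cyc_joinable a b.
Proof. by move=> H; exists a, b; do !split=> //; exact: cyc_star_refl. Qed.

Lemma cyc_joinable_conj a b a' b' :
  cyc_conj a a' -> cyc_conj b b' -> cyc_joinable a' b' -> cyc_joinable a b.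
Proof.
move=> Ha Hb [z1 [z2 [S1 [S2 K]]]].
have [y1 [T1 L1]] := cyc_star_conjl Ha S1.
have [y2 [T2 L2]] := cyc_star_conjl Hb S2.
exists y1, y2; do !split=> //.
exact: cyc_conj_trans L1 (cyc_conj_trans K (cyc_conj_sym L2)).
Qed.

Lemma cyc_joinable_peak W x1 x2 :
  confluent R -> rstep R W x1 -> rstep R W x2 -> cyc_joinable x1 x2.
Proof.
move=> Hc H1 H2.
have [z [Z1 Z2]] := Hc _ _ _ (rstar_step H1 (rstar_refl _ _))
                             (rstar_step H2 (rstar_refl _ _)).
by exists z, z; do !split; [exact: rstar_cyc_star.. | exact: cyc_conj_refl].
Qed.

(* The occurrence of l2 lies inside B, so both redexes occur in the single
   conjugate A ++ B of the word. *)
Lemma cyc_joinable_disjoint l1 r1 l2 r2 s t A B :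
  confluent R -> R l1 r1 -> R l2 r2 ->
  l1 ++ s = A ++ B -> l2 ++ t = B ++ A -> size l2 <= size B ->
  cyc_joinable (r1 ++ s) (r2 ++ t).
Proof.
move=> Hc H1 H2 E1 E2 /(cat_split_prefix E2) [m [EB Et]].
apply: (@cyc_joinable_conj _ _ (r1 ++ s) (A ++ r2 ++ m)).
- exact: cyc_conj_refl.
- by rewrite Et catA; exact: cyc_conj_cat.
apply: (@cyc_joinable_peak (A ++ l2 ++ m)) => //; last exact: rstep_cat.
by rewrite -EB -E1; exact: (@rstep_cat [::]).
Qed.

End CyclicReduction.

Lemma cyc_conj_rhs_of_inclusion (T : Type) (l1 r1 l2 r2 m t e : seq T) :
  ~ cyc_inclusion l1 r1 l2 r2 -> l1 = m ++ t ++ e -> l2 = e ++ m ->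
  cyc_conj r1 (r2 ++ t).
Proof.
move=> N E1 E2; case: t E1 => [|c t] E1.
  rewrite cats0; apply: NNPP => Hn; apply: N; left; split=> //.
  by rewrite E1 E2; exact: cyc_conj_cat.
apply: cyc_conj_trans (cyc_conj_cat _ _); apply: NNPP => Hn; apply: N; right.
exists ((c :: t) ++ l2), (c :: t); split=> //.
by rewrite E1 E2 !catA -(catA m); exact: cyc_conj_cat.
Qed.

(* The redexes l1 = m t e and l2 = e s m cover the cyclic word, overlapping
   in m and in e. *)
Lemma cyc_conj_rhs_of_overlap (T : Type) (l1 r1 l2 r2 m t e s : seq T) :
  ~ cyc_overlap l1 r1 l2 r2 ->
  ~ cyc_inclusion l1 r1 l2 r2 -> ~ cyc_inclusion l2 r2 l1 r1 ->
  m <> [::] -> e <> [::] -> l1 = m ++ t ++ e -> l2 = e ++ s ++ m ->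
  cyc_conj (r1 ++ s) (r2 ++ t).
Proof.
move=> No N12 N21 Hm He E1 E2.
case: s E2 => [|a s] E2.
  by rewrite cats0; exact: cyc_conj_rhs_of_inclusion N12 E1 E2.
case: t E1 => [|b t] E1.
  rewrite cats0; apply: cyc_conj_sym; apply: cyc_conj_rhs_of_inclusion N21 E2 _.
  by rewrite E1.
apply: NNPP => Hn; apply: No; exists m, (b :: t), e, (a :: s); do !split=> //.
Qed.

Section LocalConfluence.
Variables (T : Type) (R : rsystem T).
Hypothesis confR : confluent R.

Lemma cyc_joinable_redexes l1 r1 l2 r2 s t :
  R l1 r1 -> R l2 r2 ->
  ~ cyc_overlap l1 r1 l2 r2 ->
  ~ cyc_inclusion l1 r1 l2 r2 -> ~ cyc_inclusion l2 r2 l1 r1 ->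
  cyc_conj (l1 ++ s) (l2 ++ t) -> cyc_joinable R (r1 ++ s) (r2 ++ t).
Proof.
move=> H1 H2 No N12 N21 [A [B [E1 E2]]].
have [hB|hB] := leqP (size l2) (size B).
  exact: cyc_joinable_disjoint E1 E2 hB.
have [hA|hA] := leqP (size l1) (size A).
  exact/cyc_joinable_sym/(cyc_joinable_disjoint confR H2 H1 E2 E1 hA).
have [m [El2 EA]] := cat_split_prefix (esym E2) (ltnW hB).
have [e [El1 EB]] := cat_split_prefix (esym E1) (ltnW hA).
apply/cyc_conj_joinable/(cyc_conj_rhs_of_overlap No N12 N21 (m := m) (e := e)).
- by move=> Em; move: hB; rewrite El2 Em cats0 ltnn.
- by move=> Ee; move: hA; rewrite El1 Ee cats0 ltnn.
- by rewrite El1 EA catA.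
- by rewrite El2 EB catA.
Qed.

Lemma cyc_step_local_confluence w u a b :
  no_cyc_overlap_inclusion R w -> occurs_in_allseq R w u ->
  cyc_step R u a -> cyc_step R u b -> cyc_joinable R a b.
Proof.
move=> Hno Hu /cyc_step_rule [l1 [r1 [s [R1 [U1 A1]]]]].
move=> /cyc_step_rule [l2 [r2 [t [R2 [U2 A2]]]]].
have P1 : applicable_cyc l1 u by exists (l1 ++ s); split=> //; exists [::], s.
have P2 : applicable_cyc l2 u by exists (l2 ++ t); split=> //; exists [::], t.
have [No N12] := Hno u Hu _ _ _ _ R1 R2 P1 P2.
have [_ N21] := Hno u Hu _ _ _ _ R2 R1 P2 P1.
apply: cyc_joinable_conj A1 A2 (cyc_joinable_redexes R1 R2 No N12 N21 _).
exact: cyc_conj_trans (cyc_conj_sym U1) U2.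
Qed.

End LocalConfluence.

Section Termination.
Variables (T : Type) (R : rsystem T).

Definition cyc_sn : seq T -> Prop := Acc (fun y x => cyc_step R x y).

Lemma cyc_sn_star x y : cyc_sn x -> cyc_star R x y -> cyc_sn y.
Proof.
move=> Hx H; elim: H Hx => [a|a b c Hs _ IH] Ha; first exact: Ha.
exact: IH (Acc_inv Ha Hs).
Qed.

Lemma cyc_sn_normal_form u :
  cyc_sn u -> exists n, cyc_star R u n /\ cyc_irreducible R n.
Proof.
elim=> x _ IH; have [Hx|/not_cyc_irreducible_step [v Hv]] :=
  classic (cyc_irreducible R x).
  by exists x; split=> //; exact: cyc_star_refl.
have [n [Hn Nn]] := IH v Hv; exists n; split=> //; exact: cyc_star_step Hv Hn.
Qed.

Lemma not_cyc_sn_step x : ~ cyc_sn x -> exists y, cyc_step R x y /\ ~ cyc_sn y.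
Proof.
move=> H; apply: NNPP => Hn; apply: H; constructor => y Hy.
by apply: NNPP => Hy'; apply: Hn; exists y.
Qed.

(* A word that is not strongly normalizing starts an infinite chain, built by
   iterating a choice function on the subtype of such words. *)
Lemma allseq_terminates_sn w : allseq_terminates R w -> cyc_sn w.
Proof.
move=> Ht; apply: NNPP => Hw; apply: Ht.
pose S := {x : seq T | ~ cyc_sn x}.
have g (x : S) : {y : S | cyc_step R (sval x) (sval y)}.
  have [y [Hy1 Hy2]] :=
    constructive_indefinite_description _ (not_cyc_sn_step (svalP x)).
  by exists (exist _ y Hy2).
exists (fun n => sval (iter n (fun x => sval (g x)) (exist _ w Hw : S))).
by split=> [|n]; [exact: cyc_conj_refl | rewrite iterS; exact: svalP (g _)].
Qed.

End Termination.

Section Newman.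
Variables (T : Type) (R : rsystem T) (w : seq T).
Hypotheses (confR : confluent R) (noR : no_cyc_overlap_inclusion R w).

Lemma cyc_normal_form_unique u : cyc_sn R u -> cyc_star R w u ->
  forall v v', cyc_star R u v -> cyc_star R u v' ->
  cyc_irreducible R v -> cyc_irreducible R v' -> cyc_conj v v'.
Proof.
elim=> {}u Hacc IH Hw v v' /cyc_star_inv [->|[a [Sa Sav]]]
                          /cyc_star_inv [->|[b [Sb Sbv']]] Nv Nv'.
- exact: cyc_conj_refl.
- by case: (cyc_irreducible_no_step Nv Sb).
- by case: (cyc_irreducible_no_step Nv' Sa).
have Hu : occurs_in_allseq R w u by exists w; split=> //; exact: cyc_conj_refl.
have [z1 [z2 [Z1 [Z2 K]]]] := cyc_step_local_confluence confR noR Hu Sa Sb.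
have [n [Zn Nn]] := cyc_sn_normal_form (cyc_sn_star (Hacc a Sa) Z1).
have [n' [Zn' Kn']] := cyc_star_conjl (cyc_conj_sym K) Zn.
have Nn' := cyc_irreducible_conj Nn (cyc_conj_sym Kn').
have Wa := cyc_star_trans Hw (cyc_star1 Sa).
have Wb := cyc_star_trans Hw (cyc_star1 Sb).
have Cvn := IH a Sa Wa _ _ Sav (cyc_star_trans Z1 Zn) Nv Nn.
have Cv'n' := IH b Sb Wb _ _ Sbv' (cyc_star_trans Z2 Zn') Nv' Nn'.
apply: cyc_conj_trans Cvn (cyc_conj_trans (cyc_conj_sym Kn') _).
exact: cyc_conj_sym Cv'n'.
Qed.

End Newman.

Theorem proposition5p7 (Sigma : Type) (R : rsystem Sigma) (w : seq Sigma) :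
  complete R ->
  allseq_terminates R w ->
  no_cyc_overlap_inclusion R w ->
  allseq_converges R w.
Proof.
move=> [_ confR] /allseq_terminates_sn snw noR.
have [n [Zn Nn]] := cyc_sn_normal_form snw.
exists n; split; first by exists w; split=> //; exact: cyc_conj_refl.
split=> // v' [u1 [Hu1 Sv']] Nv'.
have [n' [Zn' Kn']] := cyc_star_conjl Hu1 Sv'.
have Nn' := cyc_irreducible_conj Nv' (cyc_conj_sym Kn').
apply: cyc_conj_trans _ Kn'.
exact: (cyc_normal_form_unique confR noR snw (cyc_star_refl _ _) Zn Zn' Nn Nn').
Qed.
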